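(* Let $\mathcal{S}$ be a finite state space with non-terminal states $\mathcal{S}_N$ and reward function $r:\mathcal{S}\to\mathbb{R}$ with $r(s)<0$ for $s\in\mathcal{S}_N$, and let $\lambda>0$. Assume there is exactly one start state $s_0$. Let $\mathcal{D}$ be a dataset of transitions $(s,a,r,s')$ collected by an agent starting from $s_0$ and following the default policy $\pi_d$, stored in the order in which they were collected, and let $\mathcal{S}_V$ be the set of states visited in $\mathcal{D}$. Initialize $\mathbf{Z}\in\mathbb{R}^{|\mathcal{S}|\times|\mathcal{S}|}$ as the identity matrix, and learn it by the temporal-difference update: for a transition $(s,a,r,s')$ and for all $j\in\mathcal{S}$, $\mathbf{Z}(s,j)\leftarrow\mathbf{Z}(s,j)+\alpha\,[Y-\mathbf{Z}(s,j)]$, where $Y=\exp(r/\lambda)\big(\mathbb{1}_{\{s=j\}}+\mathbf{Z}(s',j)\big)$ if $s$ is non-terminal and $Y=\exp(r/\lambda)\mathbb{1}_{\{s=j\}}$ if $s$ is terminal, with step size $\alpha\in(0,1)$. Then, after one backward sweep through $\mathcal{D}$ (applying this update to the transitions in reverse order of collection), the top eigenvector (eigenvector of the largest eigenvalue) of $\operatorname{Sym}(\mathbf{Z}_{VV})=(\mathbf{Z}_{VV}+\mathbf{Z}_{VV}^\top)/2$ is positive, where $\mathbf{Z}_{VV}$ is the submatrix of $\mathbf{Z}$ with rows and columns indexed by $\mathcal{S}_V$.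
   Context: The default policy $\pi_d$ assigns nonzero probability to all state-action pairs; $r$ in a transition denotes the reward $r(s)$ received at state $s$. ''Positive'' for an eigenvector means it can be chosen with all entries positive. *)

From Stdlib Require List.
From HB Require Import structures.
From mathcomp Require Import all_boot all_order all_algebra.
From mathcomp Require Import reals sequences exp.
Set Implicit Arguments. Unset Strict Implicit. Unset Printing Implicit Defensive.
Import Order.TTheory GRing.Theory Num.Theory.
Local Open Scope ring_scope.

(* A transition (s, a, r, s'); the reward r is r(s), the reward received at
   state s, so it is not stored but computed from the reward function. *)
Record transition (S A : Type) := Trans { tr_s : S; tr_a : A; tr_s' : S }.

Section Defs.
Variables (S A : finType) (R : realType).

(* The data-collection relation between consecutive transitions d, e of the
   dataset: either a new episode starts at the (unique) start state s0, or the
   agent continues from the next state s' of d, which is only possible if the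
   state of d is non-terminal (an episode ends at a terminal state). *)
Definition next_ok (s0 : S) (SN : {set S}) (d e : transition S A) : bool :=
  (tr_s e == s0) || ((tr_s d \in SN) && (tr_s e == tr_s' d)).

Definition collected (s0 : S) (SN : {set S}) (P : S -> A -> S -> R)
    (pid : S -> A -> R) (D : seq (transition S A)) : Prop :=
  (forall s a, 0 < pid s a) /\
  (forall s, \sum_(a : A) pid s a = 1) /\
  (forall s a s', 0 <= P s a s') /\
  (forall s a, \sum_(s' : S) P s a s' = 1) /\
  (forall d, List.In d D -> tr_s d \in SN -> 0 < P (tr_s d) (tr_a d) (tr_s' d)) /\
  (if D is d :: _ then tr_s d = s0 else True) /\
  sorted (next_ok s0 SN) D.

Definition visited (SN : {set S}) (D : seq (transition S A)) : {set S} :=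
  [set x | has (fun d => (tr_s d == x) || ((tr_s d \in SN) && (tr_s' d == x))) D].

Definition Zinit : S -> S -> R := fun i j => (i == j)%:R.

Definition td_update (SN : {set S}) (rew : S -> R) (lam alpha : R)
    (d : transition S A) (Z : S -> S -> R) : S -> S -> R :=
  fun i j =>
    if i == tr_s d then
      let Y := if tr_s d \in SN
               then expR (rew (tr_s d) / lam) * ((tr_s d == j)%:R + Z (tr_s' d) j)
               else expR (rew (tr_s d) / lam) * (tr_s d == j)%:R in
      Z i j + alpha * (Y - Z i j)
    else Z i j.

(* One backward sweep: the last collected transition is processed first. *)
Definition backward_sweep (SN : {set S}) (rew : S -> R) (lam alpha : R)
    (D : seq (transition S A)) : S -> S -> R :=
  foldr (td_update SN rew lam alpha) Zinit D.

(* Submatrix with rows and columns indexed by V (in the enumeration order of V). *)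
Definition submx_VV (V : {set S}) (Z : S -> S -> R) : 'M[R]_#|V| :=
  \matrix_(i < #|V|, j < #|V|) Z (enum_val i) (enum_val j).

End Defs.

Definition Sym (R : fieldType) n (M : 'M[R]_n) : 'M[R]_n := (2%:R)^-1 *: (M + M^T).

(* mu is the largest eigenvalue of M (mathcomp's eigenvalue: row-vector convention). *)
Definition top_eigenvalue (R : realFieldType) n (M : 'M[R]_n) (mu : R) : Prop :=
  eigenvalue M mu /\ forall nu, eigenvalue M nu -> nu <= mu.

(* An eigenvector is positive if it can be chosen (rescaled) with all entries positive. *)
Definition positive_vec (R : realFieldType) n (v : 'rV[R]_n) : Prop :=
  exists c : R, forall i, 0 < c * v 0 i.

From Stdlib Require List.
From HB Require Import structures.
From mathcomp Require Import all_boot all_order all_algebra.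
From mathcomp Require Import reals sequences exp classical_sets.
From mathcomp Require Import lra ring.
Set Implicit Arguments. Unset Strict Implicit. Unset Printing Implicit Defensive.
Import Order.TTheory GRing.Theory Num.Theory.
Local Open Scope ring_scope.

(* Starting from the identity, every TD update replaces a row of Z by a convex
   combination of that row and a nonnegative target, so Z stays entrywise
   nonnegative with a positive diagonal, and processing a transition s -> s'
   from a non-terminal s makes Z(s, s') positive because its target contains
   Z(s', s') > 0.  As D is a walk from s0, the positive entries of Sym(Z_VV)
   connect all visited states: Sym(Z_VV) is symmetric, nonnegative and
   irreducible.  For such a matrix M the top eigenvalue is the supremum mu of
   the Rayleigh quotient; mu I - M is positive semidefinite, so for a
   mu-eigenvector v the vector |v| also attains the supremum and is again a
   mu-eigenvector.  A nonnegative eigenvector of an irreducible matrix that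
   vanishes somewhere vanishes everywhere; applied to |v| and to v + |v| this
   shows that v has no zero entry and a constant sign. *)

Lemma quadratic_ge0_discr (R : realFieldType) (a b c : R) : 0 <= c ->
  (forall t, 0 <= a + 2 * t * b + t ^+ 2 * c) -> b ^+ 2 <= a * c.
Proof.
move=> c_ge0 q_ge0; have [c_gt0|c0] := eqVneq c 0; last first.
  have := q_ge0 (- (b / c)).
  have -> : a + 2 * - (b / c) * b + (- (b / c)) ^+ 2 * c = (a * c - b ^+ 2) / c.
    by field.
  by rewrite pmulr_lge0 ?invr_gt0 ?lt0r ?c0 // subr_ge0.
rewrite c_gt0 mulr0; have [->|b0] := eqVneq b 0; first by rewrite expr0n.
have := q_ge0 (- (a + 1) / (2 * b)).
have -> : a + 2 * (- (a + 1) / (2 * b)) * b + (- (a + 1) / (2 * b)) ^+ 2 * c = -1.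
  by rewrite c_gt0; field.
by rewrite ler0N1.
Qed.

Section QuadraticForm.
Variables (R : realFieldType) (n : nat).
Implicit Types (B M : 'M[R]_n) (x y : 'rV[R]_n).

Definition qform B x y : R := (x *m B *m y^T) 0 0.
Definition sqnorm y : R := (y *m y^T) 0 0.
Definition mx_abs_sum M : R := \sum_i \sum_j `|M i j|.

Lemma qformE B x y : qform B x y = \sum_i \sum_j x 0 i * B i j * y 0 j.
Proof.
rewrite /qform mxE (eq_bigr (fun j => \sum_i x 0 i * B i j * y 0 j)) => [|j _].
  exact: exchange_big.
by rewrite !mxE mulr_suml; apply: eq_bigr => i _.
Qed.

Lemma sqnormE y : sqnorm y = \sum_i y 0 i ^+ 2.
Proof. by rewrite /sqnorm mxE; apply: eq_bigr => i _; rewrite mxE expr2. Qed.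

Lemma sqnorm_ge0 y : 0 <= sqnorm y.
Proof. by rewrite sqnormE sumr_ge0 // => i _; rewrite sqr_ge0. Qed.

Lemma sqnorm_eq0 y : (sqnorm y == 0) = (y == 0).
Proof.
apply/idP/eqP => [|->]; last by rewrite /sqnorm mul0mx mxE.
rewrite sqnormE psumr_eq0 => [/allP y0|i _]; last exact: sqr_ge0.
apply/rowP => i; rewrite mxE; apply/eqP; rewrite -sqrf_eq0.
exact: (implyP (y0 i (mem_index_enum i))).
Qed.

Lemma sqnorm_gt0 y : y != 0 -> 0 < sqnorm y.
Proof. by rewrite lt0r sqnorm_eq0 sqnorm_ge0 andbT. Qed.

Lemma sqr_le_sqnorm y i : y 0 i ^+ 2 <= sqnorm y.
Proof. by rewrite sqnormE (bigD1 i) //= lerDl sumr_ge0 // => j _; exact: sqr_ge0. Qed.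

Lemma mx_abs_sum_ge0 M : 0 <= mx_abs_sum M.
Proof. by rewrite sumr_ge0 // => i _; rewrite sumr_ge0. Qed.

Lemma qform_le_abs_sum M y : qform M y y <= mx_abs_sum M * sqnorm y.
Proof.
rewrite qformE mulr_suml; apply: ler_sum => i _; rewrite mulr_suml.
apply: ler_sum => j _; apply: le_trans (ler_norm _) _.
rewrite !normrM mulrAC mulrC; apply: ler_wpM2l => //.
have := sqr_le_sqnorm y i; have := sqr_le_sqnorm y j.
rewrite -[y 0 i ^+ 2]real_normK ?num_real // -[y 0 j ^+ 2]real_normK ?num_real //.
have := normr_ge0 (y 0 i); have := normr_ge0 (y 0 j).
move: (`|y 0 i|) (`|y 0 j|) (sqnorm y) => p q s; nra.
Qed.

Lemma qform_eigen M nu y : y *m M = nu *: y -> qform M y y = nu * sqnorm y.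
Proof. by move=> yM; rewrite /qform yM -scalemxAl mxE. Qed.

Lemma qform_scalar_sub M a y : qform (a%:M - M) y y = a * sqnorm y - qform M y y.
Proof. by rewrite /qform /sqnorm mulmxBr mul_mx_scalar mulmxBl -scalemxAl !mxE. Qed.

Section Semidefinite.
Variable B : 'M[R]_n.
Hypotheses (B_sym : B^T = B) (B_psd : forall y, 0 <= qform B y y).

Lemma qformC x y : qform B y x = qform B x y.
Proof.
rewrite !qformE exchange_big; apply: eq_bigr => i _; apply: eq_bigr => j _.
by rewrite -{1}B_sym mxE; ring.
Qed.

Lemma qformDZ x y t :
  qform B (x + t *: y) (x + t *: y) = qform B x x + 2 * t * qform B x y + t ^+ 2 * qform B y y.
Proof.
have := qformC x y; rewrite /qform linearD linearZ /= !(mulmxDl, mulmxDr).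
by rewrite -!scalemxAl -!scalemxAr !mxE => ->; ring.
Qed.

Lemma psd_cauchy_schwarz x y : qform B x y ^+ 2 <= qform B x x * qform B y y.
Proof. by apply: quadratic_ge0_discr => // t; rewrite -qformDZ. Qed.

Lemma psd_qform_eq0 u : qform B u u = 0 -> u *m B = 0.
Proof.
move=> Bu0; apply/eqP; rewrite -sqnorm_eq0 -sqrf_eq0 eq_le sqr_ge0 andbT.
by have := psd_cauchy_schwarz u (u *m B); rewrite Bu0 mul0r.
Qed.

Lemma unit_psd_qform_lbound : B \in unitmx ->
  exists2 c, 0 < c & forall y, c * sqnorm y <= qform B y y.
Proof.
move=> B_unit; set K := mx_abs_sum (invmx B)^T.
have K_ge0 : 0 <= K := mx_abs_sum_ge0 _.
exists (K + 1)^-1 => [|y]; first by rewrite invr_gt0; lra.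
pose x := y *m invmx B.
have xB : x *m B = y by rewrite mulmxKV.
have cs := psd_cauchy_schwarz x y.
rewrite [qform B x y]/qform xB -/(sqnorm y) in cs.
rewrite [qform B x x]/qform xB trmx_mul mulmxA -/(qform _ y y) in cs.
have := qform_le_abs_sum (invmx B)^T y; rewrite -/K => Ky.
have q_ge0 := B_psd y.
have sK : sqnorm y <= K * qform B y y.
  have [->|/sqnorm_gt0 s_gt0] := eqVneq y 0.
    by rewrite /sqnorm mul0mx mxE mulr_ge0.
  move: (sqnorm y) (qform B y y) (qform _ y y) cs Ky s_gt0 q_ge0 => s q p *; nra.
rewrite ler_pdivrMl ?ltr_wpDl //; lra.
Qed.

End Semidefinite.
End QuadraticForm.

Section Irreducible.
Variables (R : realFieldType) (n : nat) (M : 'M[R]_n).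

Definition mx_graph : rel 'I_n := fun i j => 0 < M i j.
Definition irreducible_mx : Prop := forall i j, connect mx_graph i j.

Hypotheses (M_ge0 : forall i j, 0 <= M i j) (M_irr : irreducible_mx).

Lemma nonneg_eigenvector_eq0 {mu : R} {w : 'rV[R]_n} {i} : (forall k, 0 <= w 0 k) ->
  w *m M = mu *: w -> w 0 i = 0 -> w = 0.
Proof.
move=> w_ge0 wM wi0.
have zero_pred j k : mx_graph j k -> w 0 k = 0 -> w 0 j = 0.
  move=> Mjk wk0; have : (w *m M) 0 k = 0 by rewrite wM mxE wk0 mulr0.
  rewrite mxE => /psumr_eq0P/(_ j isT) => /(_ (fun l _ => mulr_ge0 (w_ge0 l) (M_ge0 l k))).
  by move/eqP; rewrite mulf_eq0 (gt_eqF Mjk) orbF => /eqP.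
apply/rowP => j; rewrite mxE; have /connectP [p] := M_irr j i.
elim: p j => [|k p IH] j /=; first by move=> _ <-.
by case/andP=> Mjk /IH kp /kp; apply: zero_pred.
Qed.

Lemma positive_vec_of_abs_eigen (mu : R) (v : 'rV[R]_n) : v != 0 -> v *m M = mu *: v ->
  map_mx Num.norm v *m M = mu *: map_mx Num.norm v -> positive_vec v.
Proof.
set u := map_mx Num.norm v => v_neq0 vM uM.
have u_ge0 k : 0 <= u 0 k by rewrite mxE.
have v_neq0_at i : v 0 i != 0.
  apply: contra v_neq0 => /eqP vi0.
  have u0 : u = 0 by apply: (nonneg_eigenvector_eq0 (i := i) u_ge0 uM); rewrite mxE vi0 normr0.
  apply/eqP/rowP => k; apply/eqP; rewrite mxE -normr_eq0.
  by have /rowP/(_ k) := u0; rewrite !mxE => ->.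
pose w := v + u.
have w_ge0 k : 0 <= w 0 k.
  by rewrite !mxE; have := ler_norm (- v 0 k); rewrite normrN; lra.
have wM : w *m M = mu *: w by rewrite mulmxDl vM uM scalerDr.
have [w0|w_neq0] := eqVneq w 0.
  exists (-1) => i; rewrite mulN1r oppr_gt0 lt_neqAle v_neq0_at /=.
  have /rowP/(_ i)/eqP := w0; rewrite !mxE addr_eq0 => /eqP ->.
  by rewrite oppr_le0.
exists 1 => i; rewrite mul1r.
have : w 0 i != 0 by apply: contra w_neq0 => /eqP /(nonneg_eigenvector_eq0 w_ge0 wM) ->.
rewrite !mxE ltNge; apply: contra => v_le0.
by rewrite ler0_norm // subrr.
Qed.

End Irreducible.

Section Rayleigh.
Variables (R : realType) (n : nat) (M : 'M[R]_n).

Definition rayleigh_sup : R :=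
  sup [set qform M y y / sqnorm y | y in [set y : 'rV[R]_n | y != 0]].

Lemma qform_le_rayleigh_sup y : qform M y y <= rayleigh_sup * sqnorm y.
Proof.
have [->|y_neq0] := eqVneq y 0; first by rewrite /qform /sqnorm !mul0mx !mxE mulr0.
rewrite -ler_pdivrMr ?sqnorm_gt0 //; apply: ub_le_sup; last by exists y.
exists (mx_abs_sum M) => _ [z z_neq0 <-].
by rewrite ler_pdivrMr ?sqnorm_gt0 // qform_le_abs_sum.
Qed.

Lemma rayleigh_shift_psd y : 0 <= qform (rayleigh_sup%:M - M) y y.
Proof. by rewrite qform_scalar_sub subr_ge0 qform_le_rayleigh_sup. Qed.

Lemma eigenvalue_le_rayleigh_sup nu : eigenvalue M nu -> nu <= rayleigh_sup.
Proof.
case/eigenvalueP => y yM y_neq0.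
by have := qform_le_rayleigh_sup y; rewrite (qform_eigen yM) ler_pM2r ?sqnorm_gt0.
Qed.

Hypothesis M_sym : M^T = M.

Let shift_sym : (rayleigh_sup%:M - M)^T = rayleigh_sup%:M - M.
Proof. by rewrite linearB /= tr_scalar_mx M_sym. Qed.

(* Otherwise mu I - M would be invertible and positive semidefinite, hence
   bounded below by some c |y|^2, and mu - c would bound the Rayleigh quotient. *)
Lemma eigenvalue_rayleigh_sup : (0 < n)%N -> eigenvalue M rayleigh_sup.
Proof.
move=> n_gt0; apply: contraT => not_eigen.
have shift_unit : rayleigh_sup%:M - M \in unitmx.
  move: not_eigen; rewrite /eigenvalue /eigenspace negbK kermx_eq0.
  by rewrite -row_free_unit -opprB /row_free mxrank_opp.
have [c c_gt0 c_le] := unit_psd_qform_lbound shift_sym rayleigh_shift_psd shift_unit.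
suff : rayleigh_sup <= rayleigh_sup - c by lra.
apply: ge_sup => [|_ [y y_neq0 <-]].
  pose one : 'rV[R]_n := const_mx 1.
  have one_neq0 : one != 0.
    by apply/eqP => /rowP /(_ (Ordinal n_gt0)) /eqP; rewrite !mxE oner_eq0.
  by exists (qform M one one / sqnorm one); exists one.
rewrite ler_pdivrMr ?sqnorm_gt0 //.
by have := c_le y; rewrite qform_scalar_sub mulrBl; lra.
Qed.

Lemma rayleigh_sup_eigen_abs (v : 'rV[R]_n) : (forall i j, 0 <= M i j) ->
  v *m M = rayleigh_sup *: v -> map_mx Num.norm v *m M = rayleigh_sup *: map_mx Num.norm v.
Proof.
set u := map_mx Num.norm v => M_ge0 vM.
have uv : sqnorm u = sqnorm v.
  by rewrite !sqnormE; apply: eq_bigr => i _; rewrite mxE real_normK ?num_real.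
have le_uv : qform M v v <= qform M u u.
  rewrite !qformE; apply: ler_sum => i _; apply: ler_sum => j _; rewrite !mxE.
  by apply: le_trans (ler_norm _) _; rewrite !normrM (ger0_norm (M_ge0 i j)).
have u0 : qform (rayleigh_sup%:M - M) u u = 0.
  apply/eqP; rewrite eq_le rayleigh_shift_psd andbT qform_scalar_sub subr_le0.
  by rewrite uv -(qform_eigen vM).
have := psd_qform_eq0 shift_sym rayleigh_shift_psd u0.
by rewrite mulmxBr mul_mx_scalar => /eqP; rewrite subr_eq0 => /eqP <-.
Qed.

End Rayleigh.

Lemma perron_symmetric (R : realType) n (M : 'M[R]_n) :
  M^T = M -> (forall i j, 0 <= M i j) -> irreducible_mx M ->
  (0 < n)%N ->
  exists mu : R, top_eigenvalue M mu /\
    forall v : 'rV[R]_n, v != 0 -> v *m M = mu *: v -> positive_vec v.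
Proof.
move=> M_sym M_ge0 M_irr n_gt0; exists (rayleigh_sup M); split.
  by split; [exact: eigenvalue_rayleigh_sup | exact: eigenvalue_le_rayleigh_sup].
move=> v v_neq0 vM; have v_abs := rayleigh_sup_eigen_abs M_sym M_ge0 vM.
exact (positive_vec_of_abs_eigen M_ge0 M_irr v_neq0 vM v_abs).
Qed.

Lemma path_In_ind (T : Type) (e : rel T) (Q : T -> Prop) x s :
  (forall d f, List.In d (x :: s) -> e d f -> Q d -> Q f) ->
  Q x -> path e x s -> forall f, List.In f s -> Q f.
Proof.
elim: s x => //= y s IH x step Qx /andP [exy ys].
have Qy : Q y by apply: (step x) => //; left.
move=> f [<-|fs] //; apply: (IH y) => // d g dys; apply: step; right; exact: dys.
Qed.

Lemma In_has (T : Type) (p : pred T) (s : seq T) d : List.In d s -> p d -> has p s.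
Proof. by move=> ds pd; apply/List.existsb_exists; exists d. Qed.

Lemma hasP_In (T : Type) (p : pred T) (s : seq T) : has p s -> exists2 d, List.In d s & p d.
Proof. by case/List.existsb_exists => d [ds pd]; exists d. Qed.

Section TemporalDifference.
Variables (S A : finType) (R : realType) (SN : {set S}) (rew : S -> R) (lam alpha : R).
Hypotheses (alpha_gt0 : 0 < alpha) (alpha_lt1 : alpha < 1).

Local Notation update := (@td_update S A R SN rew lam alpha).
Local Notation sweep := (backward_sweep SN rew lam alpha).
Implicit Types (D : seq (transition S A)) (d : transition S A).

Definition td_target (d : transition S A) (Z : S -> S -> R) (j : S) : R :=
  expR (rew (tr_s d) / lam) *
    ((tr_s d == j)%:R + (if tr_s d \in SN then Z (tr_s' d) j else 0)).

Lemma td_updateE d Z i j : update d Z i j =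
  if i == tr_s d then (1 - alpha) * Z i j + alpha * td_target d Z j else Z i j.
Proof.
rewrite /td_update /td_target; case: (i == tr_s d) => //.
by case: (tr_s d \in SN); rewrite ?addr0; ring.
Qed.

Let one_sub_alpha_gt0 : 0 < 1 - alpha. Proof. by rewrite subr_gt0. Qed.

Section NonnegativeZ.
Variable Z : S -> S -> R.
Hypothesis Z_ge0 : forall i j, 0 <= Z i j.

Lemma td_target_ge0 d j : 0 <= td_target d Z j.
Proof. by rewrite mulr_ge0 ?expR_ge0 // addr_ge0 //; case: ifP. Qed.

Lemma td_update_ge_scaled d i j : (1 - alpha) * Z i j <= update d Z i j.
Proof.
rewrite td_updateE; case: ifP => _; last by rewrite ler_piMl // gerBl ltW.
by rewrite lerDl mulr_ge0 ?td_target_ge0 ?ltW.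
Qed.

Lemma td_update_ge0 d i j : 0 <= update d Z i j.
Proof.
apply: le_trans _ (td_update_ge_scaled d i j).
exact: mulr_ge0 (ltW one_sub_alpha_gt0) (Z_ge0 i j).
Qed.

Lemma td_update_gt0 d i j : 0 < Z i j -> 0 < update d Z i j.
Proof.
move=> Zij; apply: lt_le_trans _ (td_update_ge_scaled d i j).
exact: mulr_gt0 one_sub_alpha_gt0 Zij.
Qed.

Lemma td_update_edge_gt0 d : tr_s d \in SN -> 0 < Z (tr_s' d) (tr_s' d) ->
  0 < update d Z (tr_s d) (tr_s' d).
Proof.
move=> dSN Zs'; rewrite td_updateE eqxx /td_target dSN.
apply: ltr_wpDl; first exact: mulr_ge0 (ltW one_sub_alpha_gt0) (Z_ge0 _ _).
by rewrite !mulr_gt0 ?expR_gt0 // ltr_wpDl.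
Qed.

End NonnegativeZ.

Lemma backward_sweep_ge0 D i j : 0 <= sweep D i j.
Proof. by elim: D i j => [|d D IH] i j; [exact: ler0n | exact: td_update_ge0]. Qed.

Lemma backward_sweep_diag_gt0 D i : 0 < sweep D i i.
Proof.
elim: D => [|d D IH]; first by rewrite /= /Zinit eqxx ltr01.
exact: td_update_gt0 (@backward_sweep_ge0 D) _ _ _ IH.
Qed.

Lemma backward_sweep_edge_gt0 D d : List.In d D -> tr_s d \in SN ->
  0 < sweep D (tr_s d) (tr_s' d).
Proof.
elim: D => [|e D IH] //= [<-|dD] dSN.
  exact: td_update_edge_gt0 (@backward_sweep_ge0 D) _ dSN (backward_sweep_diag_gt0 D _).
exact: td_update_gt0 (@backward_sweep_ge0 D) _ _ _ (IH dD dSN).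
Qed.

End TemporalDifference.

Lemma Sym_tr (R : fieldType) n (M : 'M[R]_n) : (Sym M)^T = Sym M.
Proof. by rewrite /Sym linearZ /= linearD /= trmxK addrC. Qed.

Section SymSubmatrix.
Variables (S : finType) (R : realType) (V : {set S}) (Z : S -> S -> R).
Hypothesis Z_ge0 : forall i j, 0 <= Z i j.

Lemma Sym_submx_ge0 i j : 0 <= Sym (submx_VV V Z) i j.
Proof. by rewrite !mxE mulr_ge0 ?invr_ge0 ?ler0n ?addr_ge0. Qed.

Lemma Sym_submx_gt0 i j : 0 < Z (enum_val i) (enum_val j) -> 0 < Sym (submx_VV V Z) i j.
Proof. by move=> Zij; rewrite !mxE mulr_gt0 ?invr_gt0 ?ltr0n ?ltr_wpDr. Qed.

End SymSubmatrix.

Section Visited.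
Variables (S A : finType) (SN : {set S}) (D : seq (transition S A)).

Lemma visited_s d : List.In d D -> tr_s d \in visited SN D.
Proof. by move=> dD; rewrite inE; apply: In_has dD _; rewrite eqxx. Qed.

Lemma visited_s' d : List.In d D -> tr_s d \in SN -> tr_s' d \in visited SN D.
Proof. by move=> dD dSN; rewrite inE; apply: In_has dD _; rewrite dSN eqxx orbT. Qed.

Lemma visitedP x : x \in visited SN D ->
  exists2 d, List.In d D & (tr_s d = x) \/ (tr_s d \in SN /\ tr_s' d = x).
Proof.
rewrite inE => /hasP_In [d dD /orP [/eqP|/andP [dSN /eqP]]] <-; exists d => //.
- by left.
- by right.
Qed.

End Visited.

Section Connectivity.
Variables (S A : finType) (R : realType) (SN : {set S}) (rew : S -> R) (lam alpha : R).
Hypotheses (alpha_gt0 : 0 < alpha) (alpha_lt1 : alpha < 1).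
Variables (s0 : S) (d0 : transition S A) (D : seq (transition S A)).
Hypotheses (d0_start : tr_s d0 = s0) (D_path : path (next_ok s0 SN) d0 D).

Local Notation V := (visited SN (d0 :: D)).
Local Notation M := (Sym (submx_VV V (backward_sweep SN rew lam alpha (d0 :: D)))).

Lemma start_visited : s0 \in V.
Proof. by rewrite -d0_start visited_s //; left. Qed.

Local Notation rank := (enum_rank_in start_visited).

Lemma connect_transition d : List.In d (d0 :: D) -> tr_s d \in SN ->
  connect (mx_graph M) (rank s0) (rank (tr_s d)) ->
  connect (mx_graph M) (rank s0) (rank (tr_s' d)).
Proof.
move=> dD dSN /connect_trans; apply; apply: connect1.
apply: Sym_submx_gt0; first exact: backward_sweep_ge0.
rewrite !enum_rankK_in ?visited_s ?visited_s' //.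
exact: backward_sweep_edge_gt0.
Qed.

Lemma connect_start d : List.In d (d0 :: D) -> connect (mx_graph M) (rank s0) (rank (tr_s d)).
Proof.
have reach_d0 : connect (mx_graph M) (rank s0) (rank (tr_s d0)).
  by rewrite d0_start connect0.
case=> [<- //|dD].
apply: (path_In_ind (Q := fun d => connect _ (rank s0) (rank (tr_s d))) _ reach_d0 D_path dD).
move=> d1 d2 d1D /orP [/eqP -> _|/andP [d1SN /eqP ->]]; first exact: connect0.
exact: connect_transition.
Qed.

Lemma Sym_submx_irreducible : irreducible_mx M.
Proof.
move=> i j; suff reach k : connect (mx_graph M) (rank s0) k.
  have sym : connect_sym (mx_graph M).
    by apply: sym_connect_sym => k l; rewrite /mx_graph -{1}Sym_tr mxE.
  by rewrite (connect_trans _ (reach j)) // sym.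
rewrite -[k](enum_valK_in start_visited).
have [d dD [<-|[dSN <-]]] := visitedP (enum_valP k); first exact: connect_start.
exact: connect_transition (connect_start dD).
Qed.
End Connectivity.

Theorem propositionC3 (S A : finType) (R : realType)
    (SN : {set S}) (rew : S -> R) (lam alpha : R) (s0 : S)
    (P : S -> A -> S -> R) (pid : S -> A -> R) (D : seq (transition S A)) :
  (forall s, s \in SN -> rew s < 0) ->
  0 < lam ->
  0 < alpha < 1 ->
  collected s0 SN P pid D ->
  (0 < size D)%N ->
  let V := visited SN D in
  let M := Sym (submx_VV V (backward_sweep SN rew lam alpha D)) in
  exists mu : R, top_eigenvalue M mu /\
    forall v : 'rV[R]_#|V|, v != 0 -> v *m M = mu *: v -> positive_vec v.
Proof.
(* Only exp(r(s) / lambda) > 0 matters. *)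
move=> _ _ /andP [alpha_gt0 alpha_lt1] [_ [_ [_ [_ [_ [D_start D_sorted]]]]]].
case: D D_start D_sorted => // d0 D d0_start D_path _ V M.
apply: perron_symmetric.
- exact: Sym_tr.
- by move=> i j; apply: Sym_submx_ge0 => k l; apply: backward_sweep_ge0.
- exact: (Sym_submx_irreducible rew lam alpha_gt0 alpha_lt1 d0_start D_path).
- by apply/card_gt0P; exists s0; exact: start_visited d0_start.
Qed.
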